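(* Let $S$ be an inverse monoid and $(X,E(S),p)$ a (global) presheaf of geodesic metric spaces on which $S$ acts properly and coboundedly, and fix $x_1\in X_1$. For $R\ge0$ let $d^R$ be the path metric on $S$ of the simplicial graph $S^R$ with vertex set $S$ in which distinct $s,t$ are adjacent iff $d(x_1\cdot s,x_1\cdot t)\le R$ (edges of length $1$; $d^R(s,t)=\infty$ if no path exists). Then there exists $T\ge0$ such that for every $R\ge T$ the extended metric space $(S,d^R)$ is quasi-isometric to $(X,d)$.
   Context: An inverse monoid is a monoid $S$ (identity $1$) in which every $s$ has a unique $s^{-1}$ with $ss^{-1}s=s$, $s^{-1}ss^{-1}=s^{-1}$; $E(S)$ is its set of idempotents, a meet-semilattice with meet $ef$. Presheaf: a set $X$ with maps $p\colon X\to E(S)$ and $X\times E(S)\to X$ such that $(x\cdot e)\cdot f=x\cdot ef$, $x\cdot p(x)=x$, $p(x\cdot e)=p(x)e$; fibers $X_e=p^{-1}(e)$. A (global) presheaf of metric spaces additionally has $p$ surjective, each $X_e$ a metric space $d_e$, and $d_e(x,y)\ge d_{ef}(x\cdot f,y\cdot f)$ for $x,y\in X_e$; $d(x,y)=d_e(x,y)$ for $x,y\in X_e$ and $\infty$ across fibers. Geodesic: finite distances $D$ are realised by isometric embeddings of $[0,D]$. Action: a right action $X\times S\to X$ extending the presheaf map on $E(S)$, with $p(x\cdot s)=s^{-1}p(x)s$ and $d_e(x,y)\ge d_{s^{-1}es}(x\cdot s,y\cdot s)$ for $x,y\in X_e$. Proper: for every $y_1\in X_1$ and $R\ge0$ there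 is a finite $\mathcal C\subseteq S$ with $\{s: d(y_1\cdot s,y_1\cdot s^{-1}s)\le R\}\subseteq\{ce: c\in\mathcal C,e\in E(S)\}$. Cobounded: there are $x_1'\in X_1$, $T_0\ge0$ such that every point of $X$ equals $y\cdot s$ for some $s\in S$ and $y$ with $d(x_1',y)\le T_0$. A map $f$ between extended metric spaces $(A,d_A),(B,d_B)$ is a quasi-isometry if there are $L\ge1$, $C\ge0$ with $d_A(a,a')<\infty$ iff $d_B(f(a),f(a'))<\infty$, $\frac1L d_A(a,a')-C\le d_B(f(a),f(a'))\le Ld_A(a,a')+C$ when finite, and every point of $B$ within distance $C$ of $f(A)$; spaces are quasi-isometric if such a map exists. *)

From Stdlib Require Import Reals List.
From Coquelicot Require Import Coquelicot.
Open Scope R_scope.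

Section Defs.
Context {S : Type} (mul : S -> S -> S) (one : S) (inv : S -> S).

Definition is_inverse_monoid : Prop :=
  (forall a b c, mul (mul a b) c = mul a (mul b c)) /\
  (forall a, mul one a = a) /\
  (forall a, mul a one = a) /\
  (forall s, mul (mul s (inv s)) s = s /\ mul (mul (inv s) s) (inv s) = inv s) /\
  (forall s t, mul (mul s t) s = s -> mul (mul t s) t = t -> t = inv s).

Definition idempotent (e : S) : Prop := mul e e = e.

Context {X : Type} (p : X -> S) (act : X -> S -> X) (d : X -> X -> Rbar).

(** (Global) presheaf of metric spaces over E(S): fibres X_e = p^{-1}(e),
    d x y finite iff x,y lie in the same fibre, and then d = d_e is a metric. *)
Definition is_presheaf_of_metric_spaces : Prop :=
  (forall x, idempotent (p x)) /\
  (forall e, idempotent e -> exists x, p x = e) /\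
  (forall x e f, idempotent e -> idempotent f ->
      act (act x e) f = act x (mul e f)) /\
  (forall x, act x (p x) = x) /\
  (forall x e, idempotent e -> p (act x e) = mul (p x) e) /\
  (forall x y, is_finite (d x y) <-> p x = p y) /\
  (forall x y, Rbar_le (Finite 0) (d x y)) /\
  (forall x, d x x = Finite 0) /\
  (forall x y, d x y = Finite 0 -> x = y) /\
  (forall x y, d x y = d y x) /\
  (forall x y z, p x = p y -> p y = p z ->
      Rbar_le (d x z) (Rbar_plus (d x y) (d y z))) /\
  (forall x y e, idempotent e -> p x = p y ->
      Rbar_le (d (act x e) (act y e)) (d x y)).

Definition is_geodesic : Prop :=
  forall x y D, d x y = Finite D ->
    exists g : R -> X, g 0 = x /\ g D = y /\
      forall a b, 0 <= a <= D -> 0 <= b <= D ->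
        d (g a) (g b) = Finite (Rabs (a - b)).

Definition is_action : Prop :=
  (forall x s t, act (act x s) t = act x (mul s t)) /\
  (forall x s, p (act x s) = mul (mul (inv s) (p x)) s) /\
  (forall x y s, p x = p y -> Rbar_le (d (act x s) (act y s)) (d x y)).

Definition is_proper_action : Prop :=
  forall y1 (Rad : R), p y1 = one -> 0 <= Rad ->
    exists C : list S, forall s,
      Rbar_le (d (act y1 s) (act y1 (mul (inv s) s))) (Finite Rad) ->
      exists c e, In c C /\ idempotent e /\ s = mul c e.

Definition is_cobounded_action : Prop :=
  exists x1' (T0 : R), p x1' = one /\ 0 <= T0 /\
    forall z, exists s y, Rbar_le (d x1' y) (Finite T0) /\ z = act y s.

End Defs.

Inductive walk {V : Type} (adj : V -> V -> Prop) : nat -> V -> V -> Prop :=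
| walk_nil : forall v, walk adj 0 v v
| walk_cons : forall n u v w, adj u v -> walk adj n v w -> walk adj (S n) u w.

(** Path metric of a graph with edges of length 1: the infimum of the
    lengths of walks (p_infty if there is no walk). *)
Definition graph_dist {V : Type} (adj : V -> V -> Prop) (u v : V) : Rbar :=
  Glb_Rbar (fun r => exists n, walk adj n u v /\ r = INR n).

Definition SR_adj {S X : Type} (act : X -> S -> X) (d : X -> X -> Rbar)
  (x1 : X) (Rad : R) (s t : S) : Prop :=
  s <> t /\ Rbar_le (d (act x1 s) (act x1 t)) (Finite Rad).

Definition dR {S X : Type} (act : X -> S -> X) (d : X -> X -> Rbar)
  (x1 : X) (Rad : R) : S -> S -> Rbar :=
  graph_dist (SR_adj act d x1 Rad).

Definition is_quasi_isometry {A B : Type} (dA : A -> A -> Rbar)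
  (dB : B -> B -> Rbar) (f : A -> B) : Prop :=
  exists (L C : R), 1 <= L /\ 0 <= C /\
    (forall a a', is_finite (dA a a') <-> is_finite (dB (f a) (f a'))) /\
    (forall a a' r r', dA a a' = Finite r -> dB (f a) (f a') = Finite r' ->
        r / L - C <= r' <= L * r + C) /\
    (forall b, exists a, Rbar_le (dB b (f a)) (Finite C)).

Definition quasi_isometric {A B : Type} (dA : A -> A -> Rbar)
  (dB : B -> B -> Rbar) : Prop :=
  exists f : A -> B, is_quasi_isometry dA dB f.

From Stdlib Require Import Reals Lra Lia ZArith Classical ClassicalEpsilon.
From Coquelicot Require Import Coquelicot.
Open Scope R_scope.

(* Coboundedness, together with the fact that acting by s does not increase
   distances, makes the orbit x1·S T-dense in X with T = d(x1, x1') + T0.  For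
   R >= 2T + 1 the orbit map s |-> x1·s is then a quasi-isometry from S^R.  An
   edge moves the orbit point by at most R.  Conversely, a geodesic of length D
   is cut into at most D + 1 pieces of length <= 1; orbit points T-close to
   consecutive cut points are at most 2T + 1 <= R apart, so they give a walk of
   length at most D + 1 in S^R. *)

Lemma Rbar_bounded_is_finite (x : Rbar) (r : R) :
  Rbar_le (Finite 0) x -> Rbar_le x (Finite r) -> is_finite x.
Proof. destruct x; simpl; intros; try contradiction; reflexivity. Qed.

Lemma Rbar_finite_ge0 (x : Rbar) (r : R) :
  Rbar_le (Finite 0) x -> x = Finite r -> 0 <= r.
Proof. intros H ->; exact H. Qed.

Section GraphDistance.
Context {V : Type} (adj : V -> V -> Prop).

Lemma walk_snoc n u v w : walk adj n u v -> adj v w -> walk adj (S n) u w.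
Proof.
  induction 1; intros Hvw.
  - apply walk_cons with w; [exact Hvw | constructor].
  - apply walk_cons with v; auto.
Qed.

Lemma walk_of_lazy_chain (c : nat -> V) n :
  (forall k, (k < n)%nat -> c k = c (S k) \/ adj (c k) (c (S k))) ->
  exists m, (m <= n)%nat /\ walk adj m (c 0%nat) (c n).
Proof.
  induction n as [|n IH]; intros Hstep.
  - exists 0%nat; split; [lia | constructor].
  - destruct IH as [m [Hm Hw]]; [intros k Hk; apply Hstep; lia|].
    destruct (Hstep n (Nat.lt_succ_diag_r n)) as [Heq | Hadj].
    + exists m; split; [lia | now rewrite <- Heq].
    + exists (S m); split; [lia | now apply walk_snoc with (c n)].
Qed.

Lemma graph_dist_ge0 u v : Rbar_le (Finite 0) (graph_dist adj u v).
Proof.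
  apply (proj2 (Glb_Rbar_correct _)).
  intros r [n [_ ->]]; apply pos_INR.
Qed.

Lemma graph_dist_le_walk n u v :
  walk adj n u v -> Rbar_le (graph_dist adj u v) (Finite (INR n)).
Proof. intros Hw; apply (proj1 (Glb_Rbar_correct _)); now exists n. Qed.

Lemma graph_dist_ge a u v :
  (forall n, walk adj n u v -> a <= INR n) ->
  Rbar_le (Finite a) (graph_dist adj u v).
Proof.
  intros Hlow; apply (proj2 (Glb_Rbar_correct _)).
  intros r [n [Hw ->]]; now apply Hlow.
Qed.

Lemma graph_dist_finite_walk u v :
  is_finite (graph_dist adj u v) -> exists n, walk adj n u v.
Proof.
  intros Hfin; apply NNPP; intros Hnone.
  assert (Hinf : graph_dist adj u v = p_infty).
  { apply is_glb_Rbar_unique; split.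
    - intros r [n [Hw _]]; exfalso; apply Hnone; now exists n.
    - intros l _; now destruct l. }
  unfold is_finite in Hfin; rewrite Hinf in Hfin; discriminate.
Qed.

End GraphDistance.

Definition rips_adj {V X : Type} (d : X -> X -> Rbar) (f : V -> X) (Rad : R)
  (s t : V) : Prop :=
  s <> t /\ Rbar_le (d (f s) (f t)) (Finite Rad).

Section RipsGraph.
Context {V X : Type} (d : X -> X -> Rbar) (f : V -> X) (T Rad : R).
Hypothesis d_ge0 : forall x y, Rbar_le (Finite 0) (d x y).
Hypothesis d_refl : forall x, d x x = Finite 0.
Hypothesis d_sym : forall x y, d x y = d y x.
Hypothesis d_triangle : forall x y z a b,
  Rbar_le (d x y) (Finite a) -> Rbar_le (d y z) (Finite b) ->
  Rbar_le (d x z) (Finite (a + b)).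
Hypothesis d_geodesic : is_geodesic d.
Hypothesis T_ge0 : 0 <= T.
Hypothesis f_dense : forall z, exists v, Rbar_le (d z (f v)) (Finite T).
Hypothesis Rad_ge : 2 * T + 1 <= Rad.

Lemma geodesic_unit_steps x y D :
  d x y = Finite D ->
  exists (n : nat) (h : nat -> X), (0 < n)%nat /\ INR n <= D + 1 /\
    h 0%nat = x /\ h n = y /\
    forall k, Rbar_le (d (h k) (h (S k))) (Finite 1).
Proof.
  intros HD.
  pose proof (Rbar_finite_ge0 _ _ (d_ge0 x y) HD) as D0.
  destruct (d_geodesic _ _ _ HD) as [g [g0 [gD g_isom]]].
  destruct (archimed D) as [up_gt up_le].
  set (n := Z.to_nat (up D)).
  assert (Hn : INR n = IZR (up D)).
  { unfold n; rewrite INR_IZR_INZ, Z2Nat.id; [reflexivity|].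
    apply le_IZR; lra. }
  exists n, (fun k => g (Rmin (INR k) D)).
  split; [apply INR_lt; simpl; lra|].
  split; [lra|].
  split; [simpl; now rewrite Rmin_left|].
  split; [now rewrite Rmin_right by lra|].
  intros k.
  pose proof (pos_INR k); rewrite S_INR.
  rewrite g_isom; unfold Rmin; repeat destruct Rle_dec; simpl;
    try apply Rabs_le; lra.
Qed.

Lemma dist_le_rips_walk n s t :
  walk (rips_adj d f Rad) n s t ->
  Rbar_le (d (f s) (f t)) (Finite (Rad * INR n)).
Proof.
  induction 1 as [v | n u v w [_ Huv] _ IH].
  - rewrite d_refl; simpl; lra.
  - rewrite S_INR, Rmult_plus_distr_l, Rmult_1_r, Rplus_comm.
    now apply d_triangle with (f v).
Qed.

Lemma rips_walk_of_dist s t D :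
  d (f s) (f t) = Finite D ->
  exists m, walk (rips_adj d f Rad) m s t /\ INR m <= D + 1.
Proof.
  intros HD.
  destruct (geodesic_unit_steps _ _ _ HD)
    as [n [h [n_pos [n_le [h0 [hn h_step]]]]]].
  assert (Hshadow : exists shadow : X -> V,
             forall z, Rbar_le (d z (f (shadow z))) (Finite T)).
  { exists (fun z => proj1_sig (constructive_indefinite_description _ (f_dense z))).
    intros z; exact (proj2_sig (constructive_indefinite_description _ (f_dense z))). }
  destruct Hshadow as [shadow shadow_near].
  set (c k := if Nat.eqb k 0 then s else if Nat.eqb k n then t else shadow (h k)).
  assert (c_near : forall k, Rbar_le (d (h k) (f (c k))) (Finite T)).
  { intros k; unfold c.
    destruct (Nat.eqb_spec k 0) as [-> | _];
      [|destruct (Nat.eqb_spec k n) as [-> | _]]; auto;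
      [rewrite h0 | rewrite hn]; rewrite d_refl; simpl; lra. }
  destruct (walk_of_lazy_chain (rips_adj d f Rad) c n) as [m [Hm Hw]].
  - intros k _.
    destruct (classic (c k = c (S k))) as [Heq | Hne]; [now left | right].
    split; [exact Hne|].
    apply Rbar_le_trans with (Finite (T + 1 + T)); [|simpl; lra].
    apply d_triangle with (h (S k)); [apply d_triangle with (h k)|]; auto.
    now rewrite d_sym.
  - exists m; split.
    + replace s with (c 0%nat) by reflexivity.
      replace t with (c n) by (unfold c; destruct n; [lia|]; now rewrite Nat.eqb_refl).
      exact Hw.
    + apply le_INR in Hm; lra.
Qed.

Theorem rips_graph_quasi_isometry :
  is_quasi_isometry (graph_dist (rips_adj d f Rad)) d f.
Proof.
  set (adj := rips_adj d f Rad).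
  exists Rad, (T + 1); split; [lra|]; split; [lra|]; split; [|split].
  - intros s t; split; intros Hfin.
    + destruct (graph_dist_finite_walk adj s t Hfin) as [n Hw].
      exact (Rbar_bounded_is_finite _ _ (d_ge0 _ _)
               (dist_le_rips_walk n s t Hw)).
    + destruct (rips_walk_of_dist s t (real (d (f s) (f t)))) as [m [Hw _]];
        [now rewrite Hfin|].
      exact (Rbar_bounded_is_finite _ _ (graph_dist_ge0 adj s t)
               (graph_dist_le_walk adj m s t Hw)).
  - intros s t r r' Hr Hr'.
    pose proof (Rbar_finite_ge0 _ _ (graph_dist_ge0 adj s t) Hr) as r0.
    split.
    + destruct (rips_walk_of_dist s t r' Hr') as [m [Hw Hm]].
      pose proof (graph_dist_le_walk adj m s t Hw) as Hrm; rewrite Hr in Hrm; simpl in Hrm.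
      assert (r / Rad <= r).
      { apply Rmult_le_reg_l with Rad; [lra|].
        field_simplify; [nra | lra]. }
      lra.
    + assert (Hlow : Rbar_le (Finite (r' / Rad)) (graph_dist adj s t)).
      { apply graph_dist_ge; intros n Hw.
        pose proof (dist_le_rips_walk n s t Hw) as Hdn.
        rewrite Hr' in Hdn; simpl in Hdn.
        apply Rmult_le_reg_l with Rad; [lra|].
        field_simplify; lra. }
      rewrite Hr in Hlow; simpl in Hlow.
      apply Rmult_le_compat_l with (r := Rad) in Hlow; [|lra].
      field_simplify in Hlow; lra.
  - intros z; destruct (f_dense z) as [v Hv]; exists v.
    apply Rbar_le_trans with (Finite T); [exact Hv | simpl; lra].
Qed.

End RipsGraph.

Section PresheafAction.
Context {S X : Type} (mul : S -> S -> S) (one : S) (inv : S -> S)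
  (p : X -> S) (act : X -> S -> X) (d : X -> X -> Rbar).
Hypothesis Hpre : is_presheaf_of_metric_spaces mul p act d.

Lemma presheaf_dist_triangle x y z a b :
  Rbar_le (d x y) (Finite a) -> Rbar_le (d y z) (Finite b) ->
  Rbar_le (d x z) (Finite (a + b)).
Proof.
  destruct Hpre as [_ [_ [_ [_ [_ [Hfin [Hge0 [_ [_ [_ [Htri _]]]]]]]]]]].
  intros Hxy Hyz.
  pose proof (Rbar_bounded_is_finite _ _ (Hge0 x y) Hxy) as Fxy.
  pose proof (Rbar_bounded_is_finite _ _ (Hge0 y z) Hyz) as Fyz.
  apply Rbar_le_trans with (Rbar_plus (d x y) (d y z));
    [apply Htri; apply Hfin; assumption|].
  rewrite <- Fxy, <- Fyz in *; simpl in *; lra.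
Qed.

Lemma orbit_coarsely_dense x1 :
  is_action mul inv p act d -> is_cobounded_action one p act d -> p x1 = one ->
  exists T, 0 <= T /\ forall z, exists s, Rbar_le (d z (act x1 s)) (Finite T).
Proof.
  destruct Hpre as [_ [_ [_ [_ [_ [Hfin [Hge0 [_ [_ [Hsym _]]]]]]]]]].
  intros [_ [_ Hcontr]] [x1' [T0 [Hx1' [T0_ge0 Hcov]]]] Hx1.
  assert (HK : exists K, d x1 x1' = Finite K).
  { exists (real (d x1 x1')); symmetry; apply Hfin; congruence. }
  destruct HK as [K HK].
  exists (K + T0); split.
  - pose proof (Rbar_finite_ge0 _ _ (Hge0 x1 x1') HK); lra.
  - intros z; destruct (Hcov z) as [s [y [Hy ->]]]; exists s.
    rewrite Hsym.
    apply presheaf_dist_triangle with (act x1' s).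
    + eapply Rbar_le_trans; [apply Hcontr; congruence|].
      rewrite HK; apply Rle_refl.
    + eapply Rbar_le_trans; [apply Hcontr | exact Hy].
      apply Hfin; exact (Rbar_bounded_is_finite _ _ (Hge0 _ _) Hy).
Qed.

End PresheafAction.

Theorem lemma3p9
  (S : Type) (mul : S -> S -> S) (one : S) (inv : S -> S)
  (HS : is_inverse_monoid mul one inv)
  (X : Type) (p : X -> S) (act : X -> S -> X) (d : X -> X -> Rbar)
  (Hpre : is_presheaf_of_metric_spaces mul p act d)
  (Hgeo : is_geodesic d)
  (Hact : is_action mul inv p act d)
  (Hprop : is_proper_action mul one inv p act d)
  (Hcob : is_cobounded_action one p act d)
  (x1 : X) (Hx1 : p x1 = one) :
  exists T : R, 0 <= T /\
    forall Rad : R, T <= Rad -> quasi_isometric (dR act d x1 Rad) d.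
Proof.
  destruct (orbit_coarsely_dense mul one inv p act d Hpre x1 Hact Hcob Hx1)
    as [T [T_ge0 dense]].
  exists (2 * T + 1); split; [lra|].
  intros Rad HRad; exists (act x1).
  pose proof (presheaf_dist_triangle mul p act d Hpre) as Htri.
  destruct Hpre as [_ [_ [_ [_ [_ [_ [Hge0 [Hrefl [_ [Hsym _]]]]]]]]]].
  exact (rips_graph_quasi_isometry d (act x1) T Rad
           Hge0 Hrefl Hsym Htri Hgeo T_ge0 dense HRad).
Qed.
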